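(* Let $\mathbb{K}$ be a field and let $\mathcal{L}=\{L_1,\ldots,L_d\}$ be a configuration of $d$ mutually distinct lines in $\mathbb{P}^2(\mathbb{K})$, with set of singular points $\{P_1,\ldots,P_s\}$, $s\ge 2$ (points lying on at least two lines of $\mathcal{L}$), where $P_i$ has multiplicity $m_i$ (the number of lines of $\mathcal{L}$ through $P_i$), ordered so that $m_1\ge m_2\ge\cdots\ge m_s$. (a) If $P_1$ and $P_2$ do not lie on a common line of $\mathcal{L}$, then $m_1m_2+2\le s$. (b) If $P_1$ and $P_2$ lie on a common line of $\mathcal{L}$, then $(m_1-1)(m_2-1)+2\le s$. *)

From HB Require Import structures.
From mathcomp Require Import all_boot all_order all_algebra.
Set Implicit Arguments. Unset Strict Implicit. Unset Printing Implicit Defensive.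
Import GRing.Theory.
Local Open Scope ring_scope.

(* Projective plane P^2(K): points and lines are nonzero vectors of K^3
   (row vectors), considered up to nonzero scalar multiples. *)

Definition proportional (K : fieldType) (u v : 'rV[K]_3) : Prop :=
  exists c : K, c != 0 /\ u = c *: v.

Definition incid (K : fieldType) (P L : 'rV[K]_3) : bool :=
  (P *m L^T) 0 0 == 0.

Definition mult (K : fieldType) (d : nat) (L : 'I_d -> 'rV[K]_3) (P : 'rV[K]_3) : nat :=
  #|[set i : 'I_d | incid P (L i)]|.

Definition line_config (K : fieldType) (d : nat) (L : 'I_d -> 'rV[K]_3) : Prop :=
  (forall i, L i != 0) /\ (forall i j, i != j -> ~ proportional (L i) (L j)).

Definition enumerates_singular_points (K : fieldType) (d : nat)
    (L : 'I_d -> 'rV[K]_3) (s : nat) (P : 'I_s -> 'rV[K]_3) : Prop :=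
  [/\ forall k, P k != 0,
      forall k l, k != l -> ~ proportional (P k) (P l),
      forall k, (2 <= mult L (P k))%N &
      forall Q : 'rV[K]_3, Q != 0 -> (2 <= mult L Q)%N -> exists k, proportional Q (P k)].

(** Two distinct lines of P^2 meet in exactly one point, given by the cross
    product of their coordinate vectors.  Let A be the set of lines through
    P_1 missing P_2 and B the set of lines through P_2 missing P_1.  A line
    of A and a line of B are distinct, so they meet in a singular point,
    which is neither P_1 nor P_2; two different pairs of A x B cannot meet in
    the same point, since it would then lie on two lines through P_1 (or P_2)
    and hence be P_1 (or P_2).  Thus |A| |B| <= s - 2.  At most one line
    passes through both points, so |A| = m_1 and |B| = m_2 in case (a), and
    |A| = m_1 - 1, |B| = m_2 - 1 in case (b). *)

From HB Require Import structures.
From mathcomp Require Import all_boot all_order all_algebra.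
From mathcomp Require Import ring.
Set Implicit Arguments. Unset Strict Implicit. Unset Printing Implicit Defensive.
Import GRing.Theory.
Local Open Scope ring_scope.

Section CrossProduct.
Variable K : fieldType.
Implicit Types (u v w : 'rV[K]_3) (c : K).

Let x : 'I_3 := @Ordinal 3 0 isT.
Let y : 'I_3 := @Ordinal 3 1 isT.
Let z : 'I_3 := @Ordinal 3 2 isT.

Definition dotmx u v : K := (u *m v^T) 0 0.

Definition cross u v : 'rV[K]_3 := \row_(k < 3)
  if k == x then u 0 y * v 0 z - u 0 z * v 0 y
  else if k == y then u 0 z * v 0 x - u 0 x * v 0 z
  else u 0 x * v 0 y - u 0 y * v 0 x.

Lemma row3P u v : u 0 x = v 0 x -> u 0 y = v 0 y -> u 0 z = v 0 z -> u = v.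
Proof.
move=> ex ey ez; apply/rowP => -[[|[|[|k]]] lt_k3] //.
- by rewrite (_ : Ordinal _ = x) ?ord1 //; apply: val_inj.
- by rewrite (_ : Ordinal _ = y) ?ord1 //; apply: val_inj.
- by rewrite (_ : Ordinal _ = z) ?ord1 //; apply: val_inj.
Qed.

Lemma dotmxE u v : dotmx u v = u 0 x * v 0 x + u 0 y * v 0 y + u 0 z * v 0 z.
Proof.
rewrite /dotmx !mxE !big_ord_recl big_ord0 !mxE addr0 addrA.
have -> : lift ord0 (lift ord0 ord0) = z :> 'I_3 by apply: val_inj.
have -> : lift ord0 ord0 = y :> 'I_3 by apply: val_inj.
by have -> : ord0 = x :> 'I_3 by apply: val_inj.
Qed.

Lemma crossE u v :
  [/\ cross u v 0 x = u 0 y * v 0 z - u 0 z * v 0 y,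
      cross u v 0 y = u 0 z * v 0 x - u 0 x * v 0 z &
      cross u v 0 z = u 0 x * v 0 y - u 0 y * v 0 x].
Proof. by rewrite !mxE. Qed.

Lemma dotmxC u v : dotmx u v = dotmx v u.
Proof. by rewrite !dotmxE; ring. Qed.

Lemma dotmxZl c u v : dotmx (c *: u) v = c * dotmx u v.
Proof. by rewrite !dotmxE !mxE; ring. Qed.

Lemma dotmx_crossl u v : dotmx (cross u v) u = 0.
Proof. by case: (crossE u v) => ex ey ez; rewrite dotmxE ex ey ez; ring. Qed.

Lemma dotmx_crossr u v : dotmx (cross u v) v = 0.
Proof. by case: (crossE u v) => ex ey ez; rewrite dotmxE ex ey ez; ring. Qed.

Lemma cross_cross u v w : cross (cross u v) w = dotmx u w *: v - dotmx v w *: u.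
Proof. by apply: row3P; rewrite !mxE !dotmxE /=; ring. Qed.

Lemma cross_eq0 u v : u != 0 -> cross u v = 0 -> exists c, v = c *: u.
Proof.
move=> u_neq0 uv0; case: (crossE u v); rewrite uv0 !mxE.
move=> /esym/eqP; rewrite subr_eq0 => /eqP exy.
move=> /esym/eqP; rewrite subr_eq0 => /eqP eyz.
move=> /esym/eqP; rewrite subr_eq0 => /eqP ezx.
have [ux0|ux] := eqVneq (u 0 x) 0; last first.
  exists (v 0 x / u 0 x); apply: row3P; rewrite !mxE; first by field.
    by apply: (mulfI ux); rewrite ezx; field.
  by apply: (mulfI ux); rewrite -eyz; field.
have [uy0|uy] := eqVneq (u 0 y) 0; last first.
  exists (v 0 y / u 0 y); apply: row3P; rewrite !mxE; last 2 first.
  - by field.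
  - by apply: (mulfI uy); rewrite exy; field.
  by apply: (mulfI uy); rewrite -ezx; field.
have [uz0|uz] := eqVneq (u 0 z) 0.
  by case/eqP: u_neq0; apply: row3P; rewrite !mxE.
exists (v 0 z / u 0 z); apply: row3P; rewrite !mxE; last by field.
  by apply: (mulfI uz); rewrite eyz; field.
by apply: (mulfI uz); rewrite -exy; field.
Qed.

Lemma cross_neq0 u v : u != 0 -> v != 0 -> ~ proportional u v -> cross u v != 0.
Proof.
move=> u_neq0 v_neq0 not_uv; apply/eqP => /(cross_eq0 u_neq0) [c def_v].
have c_neq0 : c != 0 by apply: contraNneq v_neq0 => c0; rewrite def_v c0 scale0r.
apply: not_uv; exists c^-1; rewrite invr_eq0 c_neq0.
by rewrite def_v scalerA mulVf // scale1r.
Qed.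

Lemma orthogonal2_proportional u v w w' :
    u != 0 -> v != 0 -> ~ proportional u v -> w != 0 -> w' != 0 ->
    dotmx w u = 0 -> dotmx w v = 0 -> dotmx w' u = 0 -> dotmx w' v = 0 ->
  proportional w w'.
Proof.
move=> u_neq0 v_neq0 not_uv w_neq0 w'_neq0 wu wv w'u w'v.
have uv_neq0 := cross_neq0 u_neq0 v_neq0 not_uv.
have on_cross t : dotmx t u = 0 -> dotmx t v = 0 -> exists c, t = c *: cross u v.
  move=> tu tv; apply: (cross_eq0 uv_neq0).
  by rewrite cross_cross (dotmxC u) (dotmxC v) tu tv !scale0r subrr.
have [[c def_w] [c' def_w']] := (on_cross _ wu wv, on_cross _ w'u w'v).
have c_neq0 : c != 0 by apply: contraNneq w_neq0 => c0; rewrite def_w c0 scale0r.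
have c'_neq0 : c' != 0 by apply: contraNneq w'_neq0 => c0; rewrite def_w' c0 scale0r.
exists (c / c'); rewrite mulf_neq0 ?invr_eq0 //.
by rewrite def_w def_w' scalerA mulfVK.
Qed.

End CrossProduct.

Lemma incidE (K : fieldType) (p l : 'rV[K]_3) : incid p l = (dotmx p l == 0).
Proof. by []. Qed.

Lemma proportional_incid (K : fieldType) (p q l : 'rV[K]_3) :
  proportional p q -> incid p l = incid q l.
Proof. by case=> c [c_neq0 ->]; rewrite !incidE dotmxZl mulf_eq0 (negbTE c_neq0). Qed.

Section SingularPoints.
Variables (K : fieldType) (d : nat) (L : 'I_d -> 'rV[K]_3).
Variables (s : nat) (P : 'I_s -> 'rV[K]_3).
Hypothesis L_config : line_config L.
Hypothesis P_sing : enumerates_singular_points L P.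

Definition lines_through (k : 'I_s) : {set 'I_d} := [set j | incid (P k) (L j)].

Lemma lines_meet_once (i j : 'I_d) (k k' : 'I_s) : i != j ->
    incid (P k) (L i) -> incid (P k) (L j) -> incid (P k') (L i) -> incid (P k') (L j) ->
  k = k'.
Proof.
case: L_config P_sing => L_neq0 L_distinct [P_neq0 P_distinct _ _] ij.
rewrite !incidE => /eqP ki /eqP kj /eqP k'i /eqP k'j.
have [// | kk'] := eqVneq k k'; case: (P_distinct _ _ kk').
exact: (orthogonal2_proportional (L_neq0 i) (L_neq0 j) (L_distinct _ _ ij)).
Qed.

Lemma lines_meet (i j : 'I_d) : i != j ->
  exists k, incid (P k) (L i) && incid (P k) (L j).
Proof.
case: L_config P_sing => L_neq0 L_distinct [_ _ _ P_all] ij.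
have ij_neq0 := cross_neq0 (L_neq0 i) (L_neq0 j) (L_distinct _ _ ij).
have on_ij l : l \in [set i; j] -> incid (cross (L i) (L j)) (L l).
  by rewrite !inE incidE => /orP[] /eqP ->; rewrite ?dotmx_crossl ?dotmx_crossr.
have mult_ij : (2 <= mult L (cross (L i) (L j)))%N.
  have <- : #|[set i; j]| = 2%N by rewrite cards2 ij.
  by apply/subset_leq_card/subsetP => l l_ij; rewrite inE on_ij.
have [k ijk] := P_all _ ij_neq0 mult_ij; exists k.
by rewrite -!(proportional_incid _ ijk) !on_ij // !inE eqxx ?orbT.
Qed.

Lemma card_common_lines_le1 (k k' : 'I_s) : k != k' ->
  (#|lines_through k :&: lines_through k'| <= 1)%N.
Proof.
move=> kk'; apply/card_le1_eqP => j j'; rewrite !inE => /andP[jk jk'] /andP[j'k j'k'].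
apply/eqP; apply: contraT => jj'.
by case/eqP: kk'; apply: (lines_meet_once jj').
Qed.

Lemma card_private_lines (k k' : 'I_s) : k != k' ->
  (#|lines_through k :\: lines_through k'| * #|lines_through k' :\: lines_through k|
     + 2 <= s)%N.
Proof.
set A := _ :\: _; set B := _ :\: _ => kk'.
pose meet (ab : 'I_d * 'I_d) :=
  odflt k [pick l | incid (P l) (L ab.1) && incid (P l) (L ab.2)].
have meetP a b : a \in A -> b \in B ->
    [/\ incid (P (meet (a, b))) (L a), incid (P (meet (a, b))) (L b),
        meet (a, b) != k & meet (a, b) != k'].
  rewrite !inE => /andP[a_k' a_k] /andP[b_k b_k'].
  have ab : a != b by apply: contraNneq a_k' => ->.
  rewrite /meet; case: pickP => /= [l /andP[la lb] | no_meet]; last first.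
    by have [l] := lines_meet ab; rewrite no_meet.
  by split=> //; [apply: contraNneq b_k => <- | apply: contraNneq a_k' => <-].
have meet_inj : {in setX A B &, injective meet}.
  move=> [a b] [a' b']; rewrite !in_setX /= => /andP[aA bB] /andP[a'A b'B] meet_eq.
  have [ma mb mk mk'] := meetP _ _ aA bB.
  have [] := meetP _ _ a'A b'B; rewrite -meet_eq => ma' mb' _ _.
  have [-> | aa'] := eqVneq a a'; last first.
    move: aA a'A; rewrite !inE => /andP[_ ak] /andP[_ a'k].
    by case/eqP: mk; apply: (lines_meet_once aa').
  have [-> // | bb'] := eqVneq b b'.
  move: bB b'B; rewrite !inE => /andP[_ bk'] /andP[_ b'k'].
  by case/eqP: mk'; apply: (lines_meet_once bb').
have meet_sub : meet @: setX A B \subset ~: [set k; k'].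
  apply/subsetP => _ /imsetP[[a b] /[!in_setX] /andP[aA bB] ->].
  by have [_ _ mk mk'] := meetP _ _ aA bB; rewrite !inE negb_or mk mk'.
have := subset_leq_card meet_sub; rewrite (card_in_imset meet_inj) cardsX.
have := cardsC [set k; k']; rewrite cards2 kk' card_ord => card_s le_AB.
by rewrite -[X in (_ <= X)%N]card_s addnC leq_add2l.
Qed.

End SingularPoints.

Theorem lemma3 (K : fieldType) (d : nat) (L : 'I_d -> 'rV[K]_3)
    (s : nat) (P : 'I_s -> 'rV[K]_3) :
  line_config L ->
  enumerates_singular_points L P ->
  (2 <= s)%N ->
  (forall k l : 'I_s, (k <= l)%N -> (mult L (P l) <= mult L (P k))%N) ->
  forall i1 i2 : 'I_s, nat_of_ord i1 = 0%N -> nat_of_ord i2 = 1%N ->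
    ((~ exists j : 'I_d, incid (P i1) (L j) && incid (P i2) (L j)) ->
        (mult L (P i1) * mult L (P i2) + 2 <= s)%N)
    /\
    ((exists j : 'I_d, incid (P i1) (L j) && incid (P i2) (L j)) ->
        ((mult L (P i1) - 1) * (mult L (P i2) - 1) + 2 <= s)%N).
Proof.
move=> L_config P_sing _ _ i1 i2 i1_0 i2_1.
have i12 : i1 != i2 by rewrite -val_eqE /= i1_0 i2_1.
have bound := card_private_lines L_config P_sing i12.
pose C := lines_through L P i1 :&: lines_through L P i2.
have mult_split k k' : mult L (P k) =
    (#|lines_through L P k :&: lines_through L P k'|
     + #|lines_through L P k :\: lines_through L P k'|)%N.
  by rewrite cardsID.
rewrite (mult_split i1 i2) (mult_split i2 i1) (setIC (lines_through L P i2)) -/C.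
have C_le1 : (#|C| <= 1)%N := card_common_lines_le1 L_config P_sing i12.
split=> [no_common | [j j_common]].
  suff -> : #|C| = 0%N by [].
  apply/eqP; rewrite cards_eq0; apply/eqP/setP => j; rewrite !inE.
  by apply/negP => j_common; apply: no_common; exists j.
suff -> : #|C| = 1%N by rewrite !addKn.
by apply/eqP; rewrite eqn_leq C_le1 card_gt0; apply/set0Pn; exists j; rewrite !inE.
Qed.
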